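(* Let $T$ be a tree on $n$ vertices. Suppose there are a leaf $v$ of $T$ and an integer $k\ge1$ such that $|N_2(v)|=\lceil n/2\rceil-4+k$ and $|N_{\ge4}(v)|\ge k$. Then $\operatorname{diam}(\mathcal{C}_3(T))\ge\lfloor 3n/2\rfloor+1$.
   Context: For a vertex $v$ of a tree, $N_i(v)$ is the set of vertices at distance exactly $i$ from $v$ and $N_{\ge i}(v)$ the set of vertices at distance at least $i$ from $v$. A proper 3-coloring of a tree $T=(V,E)$ is a map $f\colon V\to\mathbb{Z}/3\mathbb{Z}$ with $f(u)\neq f(v)$ for every edge $uv\in E$. The 3-coloring graph $\mathcal{C}_3(T)$ has the proper 3-colorings as vertices, two colorings adjacent iff they differ at exactly one vertex; $\operatorname{diam}$ denotes graph diameter. *)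

From mathcomp Require Import all_boot.
Set Implicit Arguments. Unset Strict Implicit. Unset Printing Implicit Defensive.

Section Graphs.
Variable T : finType.
Implicit Types (e : rel T).

Definition simple_graph e := symmetric e /\ irreflexive e.

Definition is_tree e :=
  [/\ simple_graph e,
      (forall x y : T, connect e x y) &
      (forall c : seq T, uniq c -> 3 <= size c -> ~~ cycle e c)].

Definition degree e (v : T) := #|[set u | e v u]|.
Definition leaf e (v : T) := degree e v == 1.

Definition walk_len e (u w : T) (k : nat) : bool :=
  [exists p : k.-tuple T, path e u p && (last u p == w)].

(* dist(u,w) >= m : no walk of length < m (dist = +oo if unreachable) *)
Definition dist_ge e (u w : T) (m : nat) : bool :=
  [forall j : 'I_m, ~~ walk_len e u w j].

Definition dist_eq e (u w : T) (i : nat) : bool :=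
  walk_len e u w i && dist_ge e u w i.

Definition Nd e (v : T) (i : nat) : {set T} := [set u | dist_eq e v u i].
Definition Nge e (v : T) (i : nat) : {set T} := [set u | dist_ge e v u i].

(* diam(G) >= m, where G is the graph on the vertices satisfying [vert]
   with adjacency [e] (diameter = max distance, +oo if disconnected) *)
Definition diam_ge (vert : pred T) e (m : nat) : Prop :=
  exists u w, [/\ vert u, vert w & dist_ge e u w m].
End Graphs.

Section Colorings.
Variable V : finType.
Variable e : rel V.

Definition coloring3 := {ffun V -> 'I_3}.

Definition proper3 (f : coloring3) : bool :=
  [forall x, forall y, e x y ==> (f x != f y)].

Definition col_adj : rel coloring3 :=
  fun f g => [&& proper3 f, proper3 g & #|[set x | f x != g x]| == 1].
End Colorings.

From mathcomp Require Import all_boot all_algebra zify.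
Set Implicit Arguments. Unset Strict Implicit. Unset Printing Implicit Defensive.

(* Lift a proper 3-colouring c to an integer height H with H = c (mod 3) and H changing by
   +-1 along every edge.  Recolouring one vertex x forces all neighbours of x to one height,
   so the lift follows by moving H x by +-2: a walk of length j in C_3(T) moves the height
   by at most 2j in l^1 and keeps its parity.  On a connected graph two lifts of the same
   colouring differ by a constant.

   Let d be the distance from the leaf v and E the potential 4, 3, 2, 1 on levels 0..3 and
   1 beyond, except 0 on k farthest vertices (chosen upward closed).  Then d and d + 2E are
   heights of two colourings f and g; any lift of g reached from f is d + 2E + 6t, so a walk
   from f to g has length at least sum |E + 3t|.  The size of N_2(v) makes both t = 0 and
   t = -1 give at least floor(3n/2) + 1, and t <= -2 costs 2 per vertex. *)

Lemma walk_lenP (T : finType) (e : rel T) u w k :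
  reflect (exists p : seq T, [/\ size p = k, path e u p & last u p = w])
          (walk_len e u w k).
Proof.
apply: (iffP existsP) => [[p /andP[pp /eqP lp]]|[p [sp pp lp]]].
  by exists (tval p); split=> //; exact: size_tuple.
have sp' : size p == k by rewrite sp.
by exists (Tuple sp'); rewrite /= pp lp eqxx.
Qed.

Lemma not_uniq_split (T : eqType) (s : seq T) :
  ~~ uniq s -> exists x s1 s2 s3, s = s1 ++ x :: s2 ++ x :: s3.
Proof.
elim: s => [//|y t IH] /=; rewrite negb_and negbK.
case/orP=> [yt|/IH [x [s1 [s2 [s3 ->]]]]].
  by case/splitPr: yt => t1 t2; exists y, [::], t1, t2.
by exists x, (y :: s1), s2, s3.
Qed.

(* Split a repeated vertex off: one of the two closed subwalks is shorter and still odd. *)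
Lemma odd_cycle_uniq (T : eqType) (e : rel T) (s : seq T) :
  irreflexive e -> cycle e s -> odd (size s) ->
  exists c, [/\ uniq c, 2 < size c & cycle e c].
Proof.
move=> irr; elim: {s}(size s) {-2}s (leqnn (size s)) => [|N IH] s.
  by rewrite leqn0 => /eqP ->.
move=> sz cyc od; have [us|] := boolP (uniq s).
  exists s; split=> //.
  by case: s sz cyc od us => [|x [|y [|z s']]] //= _; rewrite irr.
case/not_uniq_split=> x [s1 [s2 [s3 Es]]]; subst s.
have : cycle e (x :: s2 ++ x :: s3 ++ s1).
  by move: cyc; rewrite -(rot_cycle (size s1)) rot_size_cat /= -catA.
rewrite /= rcons_cat cat_path /= => /and3P[p2 ex p3].
have c2 : cycle e (x :: s2) by rewrite /= rcons_path p2 ex.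
move: od sz; rewrite !size_cat /= size_cat /= => od sz.
case o2: (odd (size s2)).
- apply: (IH (x :: s3 ++ s1)) => //=; rewrite size_cat; first lia.
  by move: od; rewrite !oddD /= !oddD /= o2; case: (odd (size s1)); case: (odd (size s3)).
- by apply: (IH (x :: s2)) => //=; [lia | rewrite o2].
Qed.

(* Two walks of equal length from [v] ending at adjacent vertices close up an odd walk. *)
Lemma tree_no_flat_edge (T : finType) (e : rel T) (v x y : T) (p q : seq T) :
  is_tree e -> path e v p -> last v p = x -> path e v q -> last v q = y ->
  size p = size q -> ~~ e x y.
Proof.
case=> [[sym irr] _ nocyc] pp lp pq lq spq; apply/negP => exy.
case: q pq lq spq => [|q1 q'] pq lq spq.
  by case: p pp lp spq => [|//] _ /= lp _; move: exy; rewrite -lp -lq irr.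
set s := y :: rcons (rev (belast q1 q')) v ++ p.
have cs : cycle e s.
  rewrite /s /= rcons_cat cat_path last_rcons (rcons_path _ v) pp lp exy andbT.
  have E : (fun z : T => e^~ z) =2 e by move=> a b; rewrite /= sym.
  have := rev_path e v (q1 :: q'); rewrite lq (eq_path E) pq.
  by rewrite [belast _ _]/= rev_cons andbT.
have os : odd (size s).
  rewrite /s /= size_cat size_rcons size_rev size_belast spq /= negbK addnS /= oddD.
  by case: odd.
have [c [uc sc cc]] := odd_cycle_uniq irr cs os.
by move: (nocyc c uc sc); rewrite cc.
Qed.

Section Distance.
Variables (T : finType) (e : rel T).
Hypothesis conn : forall x y, connect e x y.
Variable v : T.

Lemma walk_len_exists x : exists k, walk_len e v x k.
Proof.
have /connectP [p pp lp] := conn v x.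
by exists (size p); apply/walk_lenP; exists p.
Qed.

Definition gdist x := ex_minn (walk_len_exists x).

Lemma gdist_walk x : walk_len e v x (gdist x).
Proof. by rewrite /gdist; case: ex_minnP. Qed.

Lemma gdist_min x k : walk_len e v x k -> gdist x <= k.
Proof. by rewrite /gdist; case: ex_minnP => m _; apply. Qed.

Lemma dist_geE x i : dist_ge e v x i = (i <= gdist x).
Proof.
apply/forallP/idP => [H|le j].
  by rewrite leqNgt; apply/negP => lt; have := H (Ordinal lt); rewrite gdist_walk.
by apply/negP => /gdist_min; have := ltn_ord j; lia.
Qed.

Lemma dist_eqE x i : dist_eq e v x i = (gdist x == i).
Proof.
rewrite /dist_eq dist_geE; apply/andP/eqP => [[/gdist_min]|<-]; first lia.
by rewrite gdist_walk.
Qed.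

Lemma gdist_eq0 x : (gdist x == 0) = (x == v).
Proof.
apply/eqP/eqP => [d0|->].
  by have := gdist_walk x; rewrite d0 => /walk_lenP [p [/size0nil -> _ <-]].
have : gdist v <= 0 by apply: gdist_min; apply/walk_lenP; exists [::].
lia.
Qed.

Lemma gdist_edge_le x y : e x y -> gdist y <= (gdist x).+1.
Proof.
move=> exy; have /walk_lenP [p [sp pp lp]] := gdist_walk x.
apply: gdist_min; apply/walk_lenP; exists (rcons p y).
by rewrite size_rcons sp rcons_path pp lp exy last_rcons.
Qed.

Lemma gdist1 : irreflexive e -> [set x | gdist x == 1] = [set y | e v y].
Proof.
move=> irr; apply/setP => x; rewrite !inE; apply/eqP/idP => [dx1|evx].
  have := gdist_walk x; rewrite dx1 => /walk_lenP [p [sp pp <-]].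
  by case: p sp pp => [|y [|//]] //= _; rewrite andbT.
have : x != v by apply: contraTneq evx => ->; rewrite irr.
rewrite -gdist_eq0; have := gdist_edge_le evx.
have /eqP -> : gdist v == 0 by rewrite gdist_eq0.
lia.
Qed.

Hypothesis tree : is_tree e.

Lemma tree_gdist_edge x y : e x y -> gdist y = (gdist x).+1 \/ gdist x = (gdist y).+1.
Proof.
have [[sym _] _ _] := tree; move=> exy.
have := gdist_edge_le exy; have := gdist_edge_le (y := x) (x := y); rewrite sym exy.
move=> /(_ isT) h1 h2.
have /walk_lenP [p [sp pp lp]] := gdist_walk x.
have /walk_lenP [q [sq pq lq]] := gdist_walk y.
case: (ltngtP (gdist x) (gdist y)) => c; [left|right|]; try lia.
by move: exy; rewrite (negbTE (tree_no_flat_edge tree pp lp pq lq _)) // sp sq.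
Qed.

End Distance.

Lemma upclosed_subset (T : finType) (d : T -> nat) (A : {set T}) k :
  k <= #|A| ->
  exists Z : {set T}, [/\ #|Z| = k, Z \subset A &
     forall x y, x \in Z -> y \in A -> d x < d y -> y \in Z].
Proof.
elim: k => [|k IH] lek.
  by exists set0; rewrite cards0 sub0set; split=> // x y; rewrite inE.
have [Z [cZ sZ uZ]] := IH (ltnW lek).
have : A :\: Z != set0.
  apply: contraTneq lek => /eqP; rewrite setD_eq0 => /subset_leq_card.
  by rewrite cZ; lia.
case/set0Pn => x0 x0D; case: (arg_maxnP d x0D) => x /setDP [xA xZ] xmax.
exists (x |: Z); split.
- by rewrite cardsU1 xZ cZ.
- by rewrite subUset sub1set xA sZ.
- move=> z y; rewrite !inE => /predU1P [->|zZ] yA lt; last first.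
    by rewrite (uZ z y zZ yA lt) orbT.
  apply/orP; right; apply/negPn/negP => yZ.
  have : y \in A :\: Z by rewrite inE yZ yA.
  by move/xmax; lia.
Qed.

Import GRing.Theory.

Definition col_of_height (h : int) : 'I_3 := inord (absz (h %% 3)%Z).

Lemma col_of_heightE h : (col_of_height h : int) = (h %% 3)%Z.
Proof.
rewrite /col_of_height inordK; first lia.
have : (0 <= (h %% 3)%Z)%R /\ ((h %% 3)%Z < 3)%R by lia.
lia.
Qed.

Section Heights.
Variables (V : finType) (e : rel V).
Hypothesis simple : simple_graph e.

Definition height (c : coloring3 V) (H : V -> int) :=
  (forall x, (H x %% 3)%Z = c x) /\
  (forall a b, e a b -> H b = (H a + 1)%R \/ H b = (H a - 1)%R).

Definition hdist (H H' : V -> int) := \sum_x absz (H x - H' x)%R.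

Lemma height_proper c H : height c H -> proper3 e c.
Proof.
case=> Hm He; apply/forallP => a; apply/forallP => b; apply/implyP => eab.
apply/negP => /eqP cab; have := Hm a; have := Hm b; rewrite cab.
by case: (He a b eab); lia.
Qed.

Lemma height_col_of_height H :
  (forall a b, e a b -> H b = (H a + 1)%R \/ H b = (H a - 1)%R) ->
  height [ffun x => col_of_height (H x)] H.
Proof. by split=> // x; rewrite ffunE col_of_heightE. Qed.

Lemma col_adj_recolor c c' : col_adj e c c' ->
  exists x, c' x != c x /\ forall y, y != x -> c' y = c y.
Proof.
case/and3P=> _ _ /cards1P [x Ex]; exists x.
have diff y : (c y != c' y) = (y == x) by rewrite -in_set1 -Ex inE.
split; first by rewrite eq_sym diff.
by move=> y /negbTE; rewrite -diff => /negbFE /eqP.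
Qed.

(* All neighbours of the recoloured vertex [x] sit at the same height [H x + s];
   otherwise they would use both colours other than [c x], leaving none for [c' x]. *)
Lemma height_recolor c c' H : col_adj e c c' -> height c H ->
  exists H', [/\ height c' H', forall y, (H' y = H y %[mod 2])%Z & hdist H H' <= 2].
Proof.
have [sym irr] := simple; move=> adj [Hm He].
have [x [cx same]] := col_adj_recolor adj.
move: cx; rewrite -(inj_eq val_inj) /= => /eqP cx.
have pc' : proper3 e c' by case/and3P: adj.
have c'x_lt3 : (c' x : nat) < 3 by [].
pose s : int := if ((H x + 2) %% 3 == c' x)%Z then 1%R else (-1)%R.
have s_pm1 : s = 1%R \/ s = (-1)%R by rewrite /s; case: ifP; [left|right].
have s_nbr y : e x y -> H y = (H x + s)%R.
  move=> exy; have yx : y != x by apply: contraTneq exy => ->; rewrite irr.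
  have : c' x != c' y by move/forallP: pc' => /(_ x) /forallP /(_ y); rewrite exy.
  rewrite (same y yx) -(inj_eq val_inj) /= => /eqP cxy.
  have := Hm x; have := Hm y.
  by rewrite /s; case: ifP => /eqP; case: (He x y exy); lia.
have s_col : ((H x + 2 * s) %% 3)%Z = c' x.
  by have := Hm x; rewrite /s; case: ifP => /eqP; lia.
pose H' y := if y == x then (H x + 2 * s)%R else H y.
exists H'; split.
- split=> [y|a b eab]; rewrite /H'.
    by case: eqP => [->|/eqP yx]; last rewrite same.
  case: (eqVneq a x) => [ax|ax]; case: (eqVneq b x) => [bx|bx].
  + by move: eab; rewrite ax bx irr.
  + by move: eab; rewrite ax => /s_nbr /=; lia.
  + by move: eab; rewrite bx sym => /s_nbr /=; lia.
  + exact: He.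
- by move=> y; rewrite /H'; case: eqP => [->|_]; lia.
- rewrite /hdist (bigD1 x) //= big1 => [|y /negbTE yx]; last by rewrite /H' yx subrr.
  by rewrite /H' eqxx; lia.
Qed.

Lemma hdist_triangle H1 H2 H3 : hdist H1 H3 <= hdist H1 H2 + hdist H2 H3.
Proof. by rewrite /hdist -big_split; apply: leq_sum => x _; apply: leqD_dist. Qed.

Lemma height_walk c H p : height c H -> path (col_adj e) c p ->
  exists H', [/\ height (last c p) H', forall y, (H' y = H y %[mod 2])%Z &
                 hdist H H' <= 2 * size p].
Proof.
elim: p c H => [|c' p IH] c H hH /=.
  by exists H; split; rewrite // /hdist big1 // => x _; rewrite subrr.
case/andP=> adj pp; have [H1 [hH1 pH1 dH1]] := height_recolor adj hH.
have [H2 [hH2 pH2 dH2]] := IH c' H1 hH1 pp.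
exists H2; split=> // [y|]; first by have := pH1 y; have := pH2 y; lia.
by have := hdist_triangle H H1 H2; lia.
Qed.

Lemma height_diff_const (g : coloring3 V) H H' :
  (forall x y, connect e x y) -> height g H -> height g H' ->
  forall x y, (H x - H' x = H y - H' y)%R.
Proof.
move=> conn [Hm He] [Hm' He'] x y; have /connectP [p pp ->] := conn x y.
elim: p x pp => [//|z p IH] x /= /andP [exz pp]; rewrite -IH //.
have := Hm x; have := Hm z; have := Hm' x; have := Hm' z.
by case: (He x z exz); case: (He' x z exz); lia.
Qed.

(* Two lifts of one colouring differ by a constant which is 0 mod 3, and 0 mod 2 when the
   lifts agree in parity; so a walk of length j from [f] to [g] yields [hdist H0 (H1 + 6t) <= 2j]. *)
Lemma col_dist_ge_heights f g H0 H1 m :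
  (forall x y, connect e x y) -> height f H0 -> height g H1 ->
  (forall x, (H1 x = H0 x %[mod 2])%Z) ->
  (forall t : int, 2 * m <= hdist H0 (fun x => H1 x + 6 * t)%R) ->
  dist_ge (col_adj e) f g m.
Proof.
move=> conn hH0 hH1 par bound; apply/forallP => j; apply/negP.
case/walk_lenP=> p [sp pp lp]; have [H [hH pH dH]] := height_walk hH0 pp.
rewrite lp in hH.
have [t Ht] : exists t : int, forall x, H x = (H1 x + 6 * t)%R.
  have [x0 _|V0] := pickP (xpredT : pred V); last by exists 0%R => x; have := V0 x.
  exists ((H x0 - H1 x0) %/ 6)%Z => x.
  have := height_diff_const conn hH hH1 x x0.
  have := hH.1 x0; have := hH1.1 x0; have := pH x0; have := par x0; lia.
have EH : hdist H0 H = hdist H0 (fun x => H1 x + 6 * t)%R.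
  by apply: eq_bigr => x _; rewrite Ht.
have := leq_trans (bound t) (leq_trans (eq_leq (esym EH)) dH).
by rewrite sp ltn_geF // ltn_mul2l ltn_ord.
Qed.
End Heights.

Lemma sum_mem_card (T : finType) (A : {set T}) : \sum_x (x \in A : nat) = #|A|.
Proof. by rewrite -sum1_card [RHS]big_mkcond; apply: eq_bigr => x _; case: (x \in A). Qed.

Lemma sum1_cardT (T : finType) : \sum_(x : T) 1 = #|T|.
Proof. by rewrite sum1_card. Qed.

Section Potential.
Variables (V : finType) (d : V -> nat) (Z : {set V}).
Hypothesis Z_far : forall x, x \in Z -> 4 <= d x.
Hypothesis Z_upclosed : forall x y, x \in Z -> d x < d y -> y \in Z.

Definition level i : {set V} := [set x | d x == i].

Definition potential x : nat := if d x <= 3 then 4 - d x else x \notin Z.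

Lemma potential_succ x y : d y = (d x).+1 ->
  potential y = potential x \/ potential x = (potential y).+1.
Proof.
rewrite /potential => dy.
have [xZ|xZ] := boolP (x \in Z); have [yZ|yZ] := boolP (y \in Z) => /=.
- by have := Z_far xZ; have := Z_far yZ; case: ifP; case: ifP; lia.
- by move: yZ; rewrite (Z_upclosed xZ) // dy.
- by have := Z_far yZ; case: ifP; case: ifP; lia.
- by case: ifP; case: ifP; lia.
Qed.

Definition potential_height x : int := (Posz (d x) + 2 * Posz (potential x))%R.

Lemma potential_height_edge a b : d b = (d a).+1 \/ d a = (d b).+1 ->
  potential_height b = (potential_height a + 1)%R \/
  potential_height b = (potential_height a - 1)%R.
Proof.
rewrite /potential_height.
by case=> h; [case: (potential_succ h) | case: (potential_succ h)]; lia.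
Qed.

Lemma potential_le4 x : potential x <= 4.
Proof. by rewrite /potential; case: ifP => _; [lia | case: (x \in Z)]. Qed.

Lemma sum_potential :
  \sum_x potential x + #|Z| = #|V| + 3 * #|level 0| + 2 * #|level 1| + #|level 2|.
Proof.
have pointwise x : potential x + (x \in Z) =
    1 + (x \in level 0) * 3 + (x \in level 1) * 2 + (x \in level 2).
  rewrite /potential !inE; have [xZ|xZ] := boolP (x \in Z).
    by have := Z_far xZ; case: (d x) => [|[|[|[|n]]]].
  by case: (d x) => [|[|[|[|n]]]].
rewrite -sum_mem_card -big_split (eq_bigr _ (fun x _ => pointwise x)).
by rewrite !big_split -!big_distrl [LHS]/= !sum_mem_card sum1_cardT; lia.
Qed.

Lemma sum_potential_sub3 :
  \sum_x absz (Posz (potential x) - 3)%R + #|level 0| + 2 * #|level 1| + #|level 2|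
  = 2 * #|V| + #|Z|.
Proof.
have pointwise x : absz (Posz (potential x) - 3)%R + (x \in level 0)
      + (x \in level 1) * 2 + (x \in level 2) = 1 + 1 + (x \in Z).
  rewrite /potential !inE; have [xZ|xZ] := boolP (x \in Z).
    by have := Z_far xZ; case: (d x) => [|[|[|[|n]]]].
  by case: (d x) => [|[|[|[|n]]]].
have : \sum_x (absz (Posz (potential x) - 3)%R + (x \in level 0) + (x \in level 1) * 2
          + (x \in level 2)) = \sum_x (1 + 1 + (x \in Z)).
  by apply: eq_bigr => x _; apply: pointwise.
move=> S; rewrite !big_split -big_distrl /= !sum_mem_card sum1_cardT in S; lia.
Qed.

Hypothesis level0 : #|level 0| = 1.
Hypothesis level1 : #|level 1| = 1.
Hypothesis level2 : #|level 2| + 4 = uphalf #|V| + #|Z|.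

(* [t = 0] and [t = -1] are the two extremal shifts; [t <= -2] costs at least 2 per vertex. *)
Lemma potential_shift_lb (t : int) :
  (3 * #|V|)./2 + 1 <= \sum_x absz (Posz (potential x) + 3 * t)%R.
Proof.
have n_gt0 : 0 < #|V| by rewrite -level0 max_card.
have [t_ge0|t_lt0] := boolP (0 <= t)%R.
  have : \sum_x potential x <= \sum_x absz (Posz (potential x) + 3 * t)%R.
    by apply: leq_sum => x _; lia.
  by have := sum_potential; lia.
have [/eqP t_m1|t_le_m2] := boolP (t == -1)%R.
  rewrite t_m1 (eq_bigr (fun x => absz (Posz (potential x) - 3)%R)) => [|x _]; last lia.
  by have := sum_potential_sub3; lia.
have : \sum_(x : V) (1 + 1) <= \sum_x absz (Posz (potential x) + 3 * t)%R.
  by apply: leq_sum => x _; have := potential_le4 x; lia.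
by move=> S; rewrite big_split /= sum1_cardT in S; lia.
Qed.

Lemma hdist_potential_height_lb (t : int) :
  2 * ((3 * #|V|)./2 + 1) <=
  hdist (fun x => Posz (d x)) (fun x => potential_height x + 6 * t)%R.
Proof.
rewrite /hdist (eq_bigr (fun x => 2 * absz (Posz (potential x) + 3 * t)%R)) => [|x _].
  by rewrite -big_distrr leq_mul2l potential_shift_lb orbT.
by rewrite /potential_height; lia.
Qed.

End Potential.

Theorem mainTheorem13 (V : finType) (e : rel V) (v : V) (k : nat) :
  is_tree e -> leaf e v -> 1 <= k ->
  (* |N_2(v)| = ceil(n/2) - 4 + k, written without truncated subtraction *)
  #|Nd e v 2| + 4 = uphalf #|V| + k ->
  k <= #|Nge e v 4| ->
  diam_ge (@proper3 V e) (col_adj e) ((3 * #|V|)./2 + 1).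
Proof.
move=> tree leaf_v _ N2 N4; have [simple conn _] := tree.
pose d := gdist conn v.
have [Z [cardZ ZN4 Z_up]] := upclosed_subset d N4.
have Z_far x : x \in Z -> 4 <= d x by move/(subsetP ZN4); rewrite inE dist_geE.
have Z_upclosed x y : x \in Z -> d x < d y -> y \in Z.
  move=> xZ lt; apply: (Z_up _ _ xZ _ lt); rewrite inE dist_geE -/d.
  by have := Z_far x xZ; lia.
have level0 : #|level d 0| = 1.
  by rewrite -(cards1 v); apply: eq_card => x; rewrite !inE gdist_eq0.
have level1 : #|level d 1| = 1 by rewrite /level gdist1; [exact/eqP | case: simple].
have level2 : #|level d 2| + 4 = uphalf #|V| + #|Z|.
  by rewrite cardZ -N2; congr (_ + _); apply: eq_card => x; rewrite !inE dist_eqE.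
have dist_edge a b : e a b -> d b = (d a).+1 \/ d a = (d b).+1.
  exact: tree_gdist_edge.
have hf : height e [ffun x => col_of_height (d x)] (fun x => Posz (d x)).
  by apply: height_col_of_height => a b /dist_edge; lia.
pose g := [ffun x => col_of_height (potential_height d Z x)].
have hg : height e g (potential_height d Z).
  by apply: height_col_of_height => a b /dist_edge /(potential_height_edge Z_far Z_upclosed).
eexists _, _; split; [exact: height_proper hf | exact: height_proper hg |].
apply: (col_dist_ge_heights simple conn hf hg) => [x|t].
  by rewrite /potential_height; lia.
exact: hdist_potential_height_lb.
Qed.
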